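(* Let $f(t)=e^{-t}/(-\log(1-e^{-t}))$ for $t>0$. Then, as $x\to\infty$, $$\int_0^{x}\log\big(1+(x-t)f(t)\big)\,f(t)\,dt=x\log x-x+O(\log x).$$ *)

From Stdlib Require Import Reals.
From Coquelicot Require Import Coquelicot.
Open Scope R_scope.

Definition f (t : R) : R := exp (- t) / (- ln (1 - exp (- t))).

Definition integrand (x t : R) : R := ln (1 + (x - t) * f t) * f t.

(** Writing u = e^{-t}, the elementary bounds
    u <= -log(1-u) <= u/(1-u) give  1 - e^{-t} <= f(t) <= 1.  Hence the
    integrand is squeezed pointwise between the explicitly integrable
    functions  log(1+x-t) - e^{-t} (log(1+x) + 1)  and  log(1+x-t),
    whose integrals over [0,x] are  (1+x) log(1+x) - x  up to an error of
    at most  log(1+x) + 1.  Comparing (1+x) log(1+x) with x log x costs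
    another O(log x). *)

From Pilot Require Import Defs.
From Stdlib Require Import Reals Lra Psatz.
From Coquelicot Require Import Coquelicot.
Open Scope R_scope.

Lemma ln_le_sub1 (y : R) : 0 < y -> ln y <= y - 1.
Proof.
intros Hy. pose proof (exp_ineq1_le (ln y)) as H. rewrite exp_ln in H; lra.
Qed.

Lemma ln_ge_1_sub_inv (y : R) : 0 < y -> 1 - / y <= ln y.
Proof.
intros Hy. pose proof (ln_le_sub1 (/ y) (Rinv_0_lt_compat y Hy)) as H.
rewrite ln_Rinv in H by exact Hy. lra.
Qed.

Lemma exp_neg_bounds (t : R) : 0 < t -> 0 < exp (- t) < 1.
Proof.
intros Ht. split; [apply exp_pos|].
rewrite <- exp_0. apply exp_increasing. lra.
Qed.

Lemma neg_ln_one_minus_bounds (u : R) :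
  0 < u < 1 -> u <= - ln (1 - u) <= u / (1 - u).
Proof.
intros Hu. split.
- pose proof (ln_le_sub1 (1 - u)). lra.
- pose proof (ln_ge_1_sub_inv (1 - u)) as H.
  replace (u / (1 - u)) with (/ (1 - u) - 1) by (field; lra). lra.
Qed.

Lemma f_bounds (t : R) : 0 < t -> 1 - exp (- t) <= Defs.f t <= 1.
Proof.
intros Ht. unfold Defs.f.
pose proof (exp_neg_bounds t Ht) as Hu.
set (u := exp (- t)) in *.
destruct (neg_ln_one_minus_bounds u Hu) as [Hlo Hhi].
set (v := - ln (1 - u)) in *.
assert (Hv : 0 < v) by lra.
split.
- apply (Rle_div_r _ _ _ Hv).
  apply Rmult_le_compat_l with (r := 1 - u) in Hhi; [|lra].
  replace ((1 - u) * (u / (1 - u))) with u in Hhi by (field; lra). exact Hhi.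
- apply (Rle_div_l _ _ _ Hv). lra.
Qed.

(** f is positive on (0, oo), so the logarithm in the integrand is defined. *)
Lemma f_pos (t : R) : 0 < t -> 0 < Defs.f t.
Proof.
intros Ht. pose proof (f_bounds t Ht). pose proof (exp_neg_bounds t Ht). lra.
Qed.

(** Near 0, f(t) <= 1/(-log t); in particular f(t) -> 0 as t -> 0+. *)
Lemma f_le_inv_neg_ln (t : R) : 0 < t < 1 -> Defs.f t <= / (- ln t).
Proof.
intros Ht. unfold Defs.f.
pose proof (exp_neg_bounds t (proj1 Ht)) as Hu.
assert (H1u : 1 - exp (- t) <= t) by (pose proof (exp_ineq1_le (- t)); lra).
assert (Hlt : ln t < 0) by (rewrite <- ln_1; apply ln_increasing; lra).
assert (Hle : ln (1 - exp (- t)) <= ln t) by (apply ln_le; lra).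
unfold Rdiv. rewrite <- (Rmult_1_l (/ - ln t)).
apply Rmult_le_compat; [lra | left; apply Rinv_0_lt_compat; lra | lra |].
apply Rinv_le_contravar; lra.
Qed.

Lemma weighted_ln_lower (g h s : R) :
  0 < g <= 1 -> g <= h -> 0 <= s ->
  g * ln (1 + s) + (g - 1) <= h * ln (1 + s * h).
Proof.
intros Hg Hgh Hs.
assert (Hmono : g * ln (1 + s * g) <= h * ln (1 + s * h)).
{ assert (0 <= ln (1 + s * g)) by (rewrite <- ln_1; apply ln_le; nra).
  assert (ln (1 + s * g) <= ln (1 + s * h)) by (apply ln_le; nra).
  nra. }
assert (Hsplit : ln g + ln (1 + s) <= ln (1 + s * g)).
{ rewrite <- ln_mult by lra. apply ln_le; nra. }
assert (Hglng : g - 1 <= g * ln g).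
{ pose proof (ln_ge_1_sub_inv g (proj1 Hg)) as H.
  replace (g - 1) with (g * (1 - / g)) by (field; lra). nra. }
nra.
Qed.

Lemma integrand_upper (x t : R) :
  0 < t -> t <= x -> 0 <= integrand x t <= ln (1 + x - t).
Proof.
intros Ht Htx. unfold integrand.
destruct (f_bounds t Ht) as [_ Hf1]. pose proof (f_pos t Ht) as Hf0.
assert (H0 : 0 <= ln (1 + (x - t) * Defs.f t)) by (rewrite <- ln_1; apply ln_le; nra).
assert (Hmono : ln (1 + (x - t) * Defs.f t) <= ln (1 + x - t)) by (apply ln_le; nra).
split; [apply Rmult_le_pos; lra | nra].
Qed.

(** Lower bound from f >= 1 - e^{-t}, via [weighted_ln_lower] with g = 1 - e^{-t};
    the loss  e^{-t}(log(1+x) + 1)  has integral at most log(1+x) + 1. *)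
Lemma integrand_lower (x t : R) :
  0 < t -> t <= x ->
  ln (1 + x - t) - exp (- t) * (ln (1 + x) + 1) <= integrand x t.
Proof.
intros Ht Htx. unfold integrand.
destruct (f_bounds t Ht) as [Hf Hf1].
pose proof (exp_neg_bounds t Ht) as Hu.
pose proof (weighted_ln_lower (1 - exp (- t)) (Defs.f t) (x - t)
              ltac:(lra) Hf ltac:(lra)) as H.
assert (0 <= ln (1 + x - t)) by (rewrite <- ln_1; apply ln_le; lra).
assert (ln (1 + x - t) <= ln (1 + x)) by (apply ln_le; lra).
replace (1 + (x - t)) with (1 + x - t) in H by ring.
nra.
Qed.

(** The integrand is at most x f(t), which is what makes it vanish at 0+. *)
Lemma integrand_le_mul_f (x t : R) : 0 < t -> t <= x -> integrand x t <= x * Defs.f t.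
Proof.
intros Ht Htx. unfold integrand.
destruct (f_bounds t Ht) as [_ Hf1]. pose proof (f_pos t Ht) as Hf0.
assert (Hpos : 0 < 1 + (x - t) * Defs.f t) by nra.
pose proof (ln_le_sub1 _ Hpos) as Hln.
apply Rle_trans with ((x - t) * Defs.f t * Defs.f t).
- apply Rmult_le_compat_r; lra.
- assert (0 <= (x - t) * Defs.f t) by (apply Rmult_le_pos; lra). nra.
Qed.

(** Differentiability on (0, x] gives continuity of the integrand there. *)
Lemma f_derivable (t : R) : 0 < t -> ex_derive Defs.f t.
Proof.
intros Ht. pose proof (exp_neg_bounds t Ht).
assert (ln (1 - exp (- t)) < 0) by (rewrite <- ln_1; apply ln_increasing; lra).
unfold Defs.f. auto_derive.
replace (1 + - exp (- t)) with (1 - exp (- t)) by ring. repeat split; lra.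
Qed.

Lemma integrand_derivable (x t : R) : 0 < t -> t <= x -> ex_derive (integrand x) t.
Proof.
intros Ht Htx. pose proof (f_pos t Ht). pose proof (f_derivable t Ht).
unfold integrand. auto_derive. repeat split; auto; nra.
Qed.

Definition integrand0 (x t : R) : R := if Rle_dec t 0 then 0 else integrand x t.

(** Continuity at 0: for 0 < t < min(1, x, e^{-x/eps}) the bounds
    0 <= integrand <= x f(t) <= x/(-log t) < eps apply. *)
Lemma integrand0_continuous_at_0 (x : R) : 0 < x -> continuous (integrand0 x) 0.
Proof.
intros Hx. apply continuity_pt_filterlim. intros eps Heps.
assert (Hxe : 0 < x / eps) by (apply Rdiv_lt_0_compat; lra).
exists (Rmin 1 (Rmin x (exp (- (x / eps))))).
split; [apply Rmin_pos; [lra | apply Rmin_pos; [lra | apply exp_pos]]|].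
intros t [_ Hdist]. simpl in Hdist |- *. unfold R_dist, integrand0 in *.
rewrite Rminus_0_r in Hdist.
destruct (Rle_dec 0 0) as [_|]; [|lra]. rewrite Rminus_0_r.
destruct (Rle_dec t 0) as [|Htpos]; [rewrite Rabs_R0; lra|].
rewrite Rabs_right in Hdist by lra.
apply Rmin_Rgt in Hdist as [Ht1 Hdist]. apply Rmin_Rgt in Hdist as [Htx Hte].
assert (Ht : 0 < t) by lra.
destruct (integrand_upper x t Ht (Rlt_le _ _ Htx)) as [H0 _].
rewrite Rabs_right by lra.
assert (Hlnt : ln t < - (x / eps))
  by (rewrite <- (ln_exp (- (x / eps))); apply ln_increasing; lra).
assert (Hf : Defs.f t < eps / x).
{ eapply Rle_lt_trans; [apply f_le_inv_neg_ln; lra|].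
  replace (eps / x) with (/ (x / eps)) by (field; lra).
  apply Rinv_lt_contravar; nra. }
pose proof (integrand_le_mul_f x t Ht (Rlt_le _ _ Htx)).
replace eps with (x * (eps / x)) by (field; lra). nra.
Qed.

(** The integrand agrees on (0, x] with the function [integrand0 x], which is
    continuous on [0, x], hence Riemann integrable. *)
Lemma integrand_integrable (x : R) : 0 < x -> ex_RInt (integrand x) 0 x.
Proof.
intros Hx. apply ex_RInt_ext with (integrand0 x).
{ rewrite Rmin_left, Rmax_right by lra. intros t Ht. unfold integrand0.
  destruct (Rle_dec t 0); [lra | reflexivity]. }
apply (ex_RInt_continuous (V := R_CompleteNormedModule)).
rewrite Rmin_left, Rmax_right by lra.
intros t [[Ht | <-] Htx]; [| exact (integrand0_continuous_at_0 x Hx)].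
apply (@continuous_ext_loc R_UniformSpace R_UniformSpace _ (integrand x)).
- exists (mkposreal t Ht). intros y Hy. unfold integrand0.
  change (Rabs (y - t) < t) in Hy. apply Rabs_def2 in Hy.
  destruct (Rle_dec y 0); [lra | reflexivity].
- apply (ex_derive_continuous (K := R_AbsRing) (V := R_NormedModule)).
  exact (integrand_derivable x t Ht Htx).
Qed.

(** Integral of the comparison functions, by the fundamental theorem of
    calculus with antiderivative  -((1+x-t) log(1+x-t) - (1+x-t)) + K e^{-t}. *)
Lemma is_RInt_comparison (x K : R) : 0 < x ->
  is_RInt (fun t => ln (1 + x - t) - exp (- t) * K) 0 x
    ((1 + x) * ln (1 + x) - x - (1 - exp (- x)) * K).
Proof.
intros Hx.
set (F := fun t => - ((1 + x - t) * ln (1 + x - t) - (1 + x - t)) + exp (- t) * K).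
replace ((1 + x) * ln (1 + x) - x - (1 - exp (- x)) * K) with (minus (F x) (F 0)).
- apply (is_RInt_derive (V := R_CompleteNormedModule) F);
    rewrite Rmin_left, Rmax_right by lra; intros t Ht.
  + unfold F. auto_derive; [lra|].
    replace (1 + x + - t) with (1 + x - t) by ring. field. lra.
  + apply (ex_derive_continuous (K := R_AbsRing) (V := R_NormedModule)).
    auto_derive. lra.
- unfold F, minus, plus, opp; simpl.
  replace (1 + x - x) with 1 by ring. replace (1 + x - 0) with (1 + x) by ring.
  rewrite ln_1, Ropp_0, exp_0. ring.
Qed.

Lemma RInt_integrand_bounds (x : R) : 0 < x ->
  (1 + x) * ln (1 + x) - x - (ln (1 + x) + 1) <= RInt (integrand x) 0 x <=
  (1 + x) * ln (1 + x) - x.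
Proof.
intros Hx.
set (K := ln (1 + x) + 1).
pose proof (RInt_correct _ _ _ (integrand_integrable x Hx)) as HI.
pose proof (is_RInt_comparison x 0 Hx) as Hup.
pose proof (is_RInt_comparison x K Hx) as Hlo.
assert (Hln : 0 <= ln (1 + x)) by (rewrite <- ln_1; apply ln_le; lra).
assert (HK : 0 <= K) by (unfold K; lra).
pose proof (exp_neg_bounds x Hx).
split.
- eapply Rle_trans; [| apply (is_RInt_le _ _ 0 x _ _ ltac:(lra) Hlo HI)].
  + nra.
  + intros t Ht. exact (integrand_lower x t ltac:(lra) ltac:(lra)).
- eapply Rle_trans; [apply (is_RInt_le _ _ 0 x _ _ ltac:(lra) HI Hup)|].
  + intros t Ht. pose proof (integrand_upper x t ltac:(lra) ltac:(lra)). lra.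
  + lra.
Qed.

Lemma ln_succ_sub_ln (x : R) : 0 < x -> 0 <= ln (1 + x) - ln x <= / x.
Proof.
intros Hx. rewrite <- ln_div by lra. split.
- rewrite <- ln_1. apply ln_le; [lra|]. apply (Rle_div_r _ _ _ Hx). lra.
- pose proof (ln_le_sub1 ((1 + x) / x) ltac:(apply Rdiv_lt_0_compat; lra)).
  replace ((1 + x) / x - 1) with (/ x) in * by (field; lra). lra.
Qed.

Theorem mainTheorem8 :
  exists C M : R, forall x : R, M <= x ->
    ex_RInt (integrand x) 0 x /\
    Rabs (RInt (integrand x) 0 x - (x * ln x - x)) <= C * ln x.
Proof.
exists 3, (exp 1). intros x Hx.
assert (Hx1 : 1 < x) by (pose proof (exp_ineq1 1); lra).
assert (Hlnx : 1 <= ln x) by (rewrite <- (ln_exp 1); apply ln_le; [apply exp_pos | lra]).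
split; [apply integrand_integrable; lra|].
destruct (RInt_integrand_bounds x ltac:(lra)) as [Hlo Hup].
destruct (ln_succ_sub_ln x ltac:(lra)) as [HD0 HD1].
assert (Hmain : (1 + x) * ln (1 + x) - x - (x * ln x - x) =
                ln (1 + x) + x * (ln (1 + x) - ln x)) by ring.
assert (HxD0 : 0 <= x * (ln (1 + x) - ln x)) by (apply Rmult_le_pos; lra).
assert (HxD1 : x * (ln (1 + x) - ln x) <= 1).
{ apply Rle_trans with (x * / x); [apply Rmult_le_compat_l; lra | right; field; lra]. }
assert (HinvX : / x <= 1) by (rewrite <- Rinv_1; apply Rinv_le_contravar; lra).
apply Rabs_le. lra.
Qed.
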